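(* Let $x$ be a sequence of length $n$, let $i\in\{1,\ldots,n-1\}$ and $y=\tau(x,i)$. Define $r=\overleftarrow{b_x}$ if $x[i]<x[i+1]$ and $\overleftarrow{b_x}>1$; $r=\overleftarrow{a_x}+1$ if $x[i]>x[i+1]$ and $\overleftarrow{a_x}>0$; and $r=n-i+1$ otherwise. Define $\ell=\overrightarrow{a_x}$ if $x[i]<x[i+1]$ and $\overrightarrow{a_x}>0$; $\ell=\overrightarrow{b_x}-1$ if $x[i]>x[i+1]$ and $\overrightarrow{b_x}>1$; and $\ell=i$ otherwise. Then $\overrightarrow{PD}_x[k]=\overrightarrow{PD}_y[k]$ for all $k\in\{i+r,\ldots,n\}$, and $\overleftarrow{PD}_x[k]=\overleftarrow{PD}_y[k]$ for all $k\in\{1,\ldots,i-\ell\}$.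
   Context: Sequences are finite sequences of pairwise distinct integers indexed from $1$. For $1\le i\le n-1$, $\tau(x,i)$ is obtained from $x$ by exchanging $x[i]$ and $x[i+1]$. The parent-distance table of $x$ is $\overrightarrow{PD}_x[k]=k-\max\{j<k : x[j]<x[k]\}$ if such $j$ exists and $0$ otherwise; the reverse parent-distance table is $\overleftarrow{PD}_x[k]=\min\{j : k<j\le n,\ x[j]<x[k]\}-k$ if such $j$ exists and $0$ otherwise. Notation: $\overrightarrow{a_x}=\overrightarrow{PD}_x[i]$, $\overrightarrow{b_x}=\overrightarrow{PD}_x[i+1]$, $\overleftarrow{a_x}=\overleftarrow{PD}_x[i+1]$, $\overleftarrow{b_x}=\overleftarrow{PD}_x[i]$. Index ranges $\{a,\ldots,b\}$ with $a>b$ are empty. *)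

From mathcomp Require Import all_boot all_order all_algebra.
Set Implicit Arguments. Unset Strict Implicit. Unset Printing Implicit Defensive.
Import Order.TTheory GRing.Theory Num.Theory.

(* Sequences: x : seq int, pairwise distinct (uniq x), indexed from 1:
   x[k] := nth 0 x (k-1) for 1 <= k <= size x. *)
Definition at1 (x : seq int) (k : nat) : int := nth 0%R x k.-1.

Definition tau (x : seq int) (i : nat) : seq int :=
  [seq (if k == i then at1 x i.+1 else if k == i.+1 then at1 x i else at1 x k)
  | k <- iota 1 (size x)].

Definition fPD (x : seq int) (k : nat) : nat :=
  if has (fun j => (at1 x j < at1 x k)%R) (iota 1 k.-1)
  then k - \max_(1 <= j < k | (at1 x j < at1 x k)%R) j
  else 0.

Definition rPD (x : seq int) (k : nat) : nat :=
  let js := [seq j <- iota k.+1 (size x - k) | (at1 x j < at1 x k)%R] in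
  if js is j :: _ then j - k else 0.

From mathcomp Require Import all_boot all_order all_algebra zify.
Import Order.TTheory GRing.Theory Num.Theory.

Set Implicit Arguments.
Unset Strict Implicit.

(* Swapping x[i] and x[i+1] changes the comparison of a position with a value
   v only at i and i+1, and only when v lies strictly between x[i] and x[i+1].
   Take k >= i + r. If x[k] lies below both x[i] and x[i+1], every comparison
   with x[k] is unchanged. Otherwise the right parent j of the smaller of
   x[i], x[i+1] (located by r) satisfies i+1 < j < k and x[j] < x[k], so the
   maximum defining fPD x k is attained at or right of j, where x and y agree.
   The reverse table is symmetric, using the left parent located by l. *)

Lemma bigmax_seq_attained (I : eqType) (s : seq I) (P : pred I) (F : I -> nat) :
  has P s -> exists2 i, (i \in s) && P i & \max_(j <- s | P j) F j = F i.
Proof.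
move=> /hasP[i0 si0 Pi0].
have : \max_(j <- s | P j) F j = 0 \/
       exists2 i, (i \in s) && P i & \max_(j <- s | P j) F j = F i.
  rewrite big_seq_cond; elim/big_ind: _ => [|u v|j sPj]; [by left| |by right; exists j].
  by case: leqP.
case=> // max0; exists i0; first by rewrite si0.
by apply/eqP; rewrite max0 eq_sym -leqn0 -max0 (leq_bigmax_seq i0).
Qed.

Lemma bigmax_nat_suffix (P : pred nat) a c b m :
  a <= c <= m -> m < b -> P m ->
  \max_(a <= j < b | P j) j = \max_(c <= j < b | P j) j.
Proof.
move=> /andP[ac cm] mb Pm; rewrite (@big_cat_nat _ _ _ c) //=; last by lia.
apply/maxn_idPr; apply: (@leq_trans m).
  by apply/bigmax_leqP_seq => j; rewrite mem_index_iota => ? _; lia.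
by apply: (leq_bigmax_seq m) => //; rewrite mem_index_iota; lia.
Qed.

Section ParentDistance.

Variable x : seq int.

Lemma fPD_parent k :
  0 < fPD x k -> 1 <= k - fPD x k < k /\ (at1 x (k - fPD x k) < at1 x k)%R.
Proof.
rewrite /fPD -subn1 -/(index_iota 1 k); case: ifP => // /bigmax_seq_attained.
move=> /(_ id) [j /andP[]]; rewrite mem_index_iota => jk xj /= -> _.
by have -> : k - (k - j) = j by lia.
Qed.

Lemma rPD_parent k :
  0 < rPD x k -> k < k + rPD x k <= size x /\ (at1 x (k + rPD x k) < at1 x k)%R.
Proof.
rewrite /rPD; case E: [seq j <- _ | _] => [//|j s] _.
have : j \in [seq j <- iota k.+1 (size x - k) | (at1 x j < at1 x k)%R].
  by rewrite E mem_head.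
rewrite mem_filter mem_iota => /andP[xj jk].
have -> : k + (j - k) = j by lia.
by split; first lia.
Qed.

Variable y : seq int.

Lemma fPD_congr k :
  (forall j, 1 <= j < k -> (at1 x j < at1 x k)%R = (at1 y j < at1 y k)%R) ->
  fPD x k = fPD y k.
Proof.
move=> Exy; rewrite /fPD (@eq_in_has _ _ (fun j => at1 y j < at1 y k)%R).
  by case: ifP => // _; congr (_ - _); apply: congr_big_nat.
by move=> j; rewrite mem_iota => jk; apply: Exy; lia.
Qed.

Lemma fPD_congr_suffix k c m :
  1 <= c <= m -> m < k -> (at1 x m < at1 x k)%R ->
  (forall j, c <= j < k -> (at1 x j < at1 x k)%R = (at1 y j < at1 y k)%R) ->
  fPD x k = fPD y k.
Proof.
move=> cm mk xm Exy; have ym : (at1 y m < at1 y k)%R by rewrite -Exy ?xm; lia.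
have mI : m \in iota 1 k.-1 by rewrite mem_iota; lia.
rewrite /fPD (introT hasP (ex_intro2 _ _ m mI xm)) (introT hasP (ex_intro2 _ _ m mI ym)).
rewrite (bigmax_nat_suffix cm mk xm) (bigmax_nat_suffix cm mk ym).
by congr (_ - _); apply: congr_big_nat.
Qed.

Hypothesis size_xy : size x = size y.

Lemma rPD_congr k :
  (forall j, k < j <= size x -> (at1 x j < at1 x k)%R = (at1 y j < at1 y k)%R) ->
  rPD x k = rPD y k.
Proof.
move=> Exy; rewrite /rPD -size_xy (@eq_in_filter _ _ (fun j => at1 y j < at1 y k)%R) //.
by move=> j; rewrite mem_iota => jk; apply: Exy; lia.
Qed.

Lemma rPD_congr_prefix k c m :
  k < m < c -> c <= size x -> (at1 x m < at1 x k)%R ->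
  (forall j, k < j < c -> (at1 x j < at1 x k)%R = (at1 y j < at1 y k)%R) ->
  rPD x k = rPD y k.
Proof.
move=> kmc cx xm Exy; rewrite /rPD -size_xy.
have -> : size x - k = (c - k.+1) + (size x - c).+1 by lia.
rewrite iotaD !filter_cat (@eq_in_filter _ (fun j => at1 y j < at1 y k)%R
  (fun j => at1 x j < at1 x k)%R); last first.
  by move=> j; rewrite mem_iota => jc; rewrite Exy //; lia.
have : has (fun j => at1 x j < at1 x k)%R (iota k.+1 (c - k.+1)).
  by apply/hasP; exists m => //; rewrite mem_iota; lia.
by rewrite has_filter; case: [seq j <- _ | _].
Qed.

End ParentDistance.

Lemma size_tau x i : size (tau x i) = size x.
Proof. by rewrite size_map size_iota. Qed.

Lemma at1_tau x i k : 1 <= k <= size x ->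
  at1 (tau x i) k = at1 x (if k == i then i.+1 else if k == i.+1 then i else k).
Proof.
move=> kx; rewrite /at1 /tau (nth_map 0) ?size_iota; last by lia.
rewrite nth_iota; last by lia.
have -> : 1 + k.-1 = k by lia.
by case: (k == i); case: (k == i.+1).
Qed.

Lemma at1_tau_id x i k :
  1 <= k <= size x -> k != i -> k != i.+1 -> at1 (tau x i) k = at1 x k.
Proof. by move=> kx /negPf ki /negPf kSi; rewrite at1_tau // ki kSi. Qed.

Lemma lt_at1_tau x i k v :
  (at1 x i < v)%R = (at1 x i.+1 < v)%R -> 1 <= k <= size x ->
  (at1 (tau x i) k < v)%R = (at1 x k < v)%R.
Proof.
move=> Ev kx; rewrite at1_tau //.
by case: eqP => [->|_] //; case: eqP => [->|_].
Qed.

Lemma fPD_tau x i j k :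
  1 <= i -> i.+2 <= j <= k -> k <= size x ->
  (at1 x j < at1 x i)%R -> (at1 x j < at1 x i.+1)%R ->
  fPD x k = fPD (tau x i) k.
Proof.
move=> i1 jk kx xji xjSi.
have yk : at1 (tau x i) k = at1 x k by apply: at1_tau_id; lia.
have [xk|] := boolP ((at1 x i < at1 x k) || (at1 x i.+1 < at1 x k))%R.
  have xjk : (at1 x j < at1 x k)%R.
    by case/orP: xk; [apply: lt_trans xji | apply: lt_trans xjSi].
  have jltk : j < k.
    by rewrite ltn_neqAle; case/andP: jk => _ ->; case: eqP xjk => // ->; rewrite ltxx.
  apply: (@fPD_congr_suffix _ _ _ i.+2 j) => //; first lia.
  by move=> l lk; rewrite yk at1_tau_id //; lia.
rewrite negb_or => /andP[/negPf xik /negPf xSik].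
apply: fPD_congr => l lk; rewrite yk lt_at1_tau ?xik ?xSik //; lia.
Qed.

Lemma rPD_tau x i j k :
  1 <= k <= j -> j < i -> i < size x ->
  (at1 x j < at1 x i)%R -> (at1 x j < at1 x i.+1)%R ->
  rPD x k = rPD (tau x i) k.
Proof.
move=> kj ji ix xji xjSi; have sx := esym (size_tau x i).
have yk : at1 (tau x i) k = at1 x k by apply: at1_tau_id; lia.
have [xk|] := boolP ((at1 x i < at1 x k) || (at1 x i.+1 < at1 x k))%R.
  have xjk : (at1 x j < at1 x k)%R.
    by case/orP: xk; [apply: lt_trans xji | apply: lt_trans xjSi].
  have kltj : k < j.
    by rewrite ltn_neqAle; case/andP: kj => _ ->; case: eqP xjk => // ->; rewrite ltxx.
  apply: (@rPD_congr_prefix _ _ sx _ i j) => //; try lia.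
  by move=> l lk; rewrite yk at1_tau_id //; lia.
rewrite negb_or => /andP[/negPf xik /negPf xSik].
apply: rPD_congr => // l lk; rewrite yk lt_at1_tau ?xik ?xSik //; lia.
Qed.

Theorem lemma4 (x : seq int) (i : nat) :
  uniq x -> 1 <= i <= (size x).-1 ->
  let n := size x in
  let y := tau x i in
  let ra := rPD x i.+1 in (* <-a_x *)
  let rb := rPD x i in    (* <-b_x *)
  let fa := fPD x i in    (* ->a_x *)
  let fb := fPD x i.+1 in (* ->b_x *)
  let r := if (at1 x i < at1 x i.+1)%R && (1 < rb) then rb
           else if (at1 x i.+1 < at1 x i)%R && (0 < ra) then ra.+1
           else n - i + 1 in
  let l := if (at1 x i < at1 x i.+1)%R && (0 < fa) then fa
           else if (at1 x i.+1 < at1 x i)%R && (1 < fb) then fb - 1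
           else i in
  (forall k, i + r <= k <= n -> fPD x k = fPD y k) /\
  (forall k, 1 <= k <= i - l -> rPD x k = rPD y k).
Proof.
move=> _ /andP[i1 ix]; cbv zeta; split => k.
- case: ifP => [/andP[xiSi rb1]|_]; [|case: ifP => [/andP[xSii ra0]|_]; last lia].
  + have [ij xji] := rPD_parent (ltnW rb1).
    move=> kx; apply: (fPD_tau (j := i + rPD x i)); rewrite ?xji ?(lt_trans xji) //; lia.
  + have [ij xjSi] := rPD_parent ra0.
    move=> kx; apply: (fPD_tau (j := i.+1 + rPD x i.+1)); rewrite ?xjSi ?(lt_trans xjSi) //; lia.
- case: ifP => [/andP[xiSi fa0]|_]; [|case: ifP => [/andP[xSii fb1]|_]; last lia].
  + have [ji xji] := fPD_parent fa0.
    move=> kx; apply: (rPD_tau (j := i - fPD x i)); rewrite ?xji ?(lt_trans xji) //; lia.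
  + have [ji xjSi] := fPD_parent (ltnW fb1).
    move=> kx; apply: (rPD_tau (j := i.+1 - fPD x i.+1)); rewrite ?xjSi ?(lt_trans xjSi) //; lia.
Qed.
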